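(* Let $\phi$ be a $C^\infty$ function on $\mathbb{R}$ supported in $[-1,1]$ with $\phi\ge0$ and $\int_{-1}^1\phi(t)\,dt=1$. For a function $f$ on $(0,\infty)$ and $\varepsilon>0$ define $f_\varepsilon(x):=\int_{-1}^1\phi(t)f(xe^{-\varepsilon t})\,dt$ for $x\in(0,\infty)$. If $f\in\mathcal{F}_\mathrm{convex}^\nearrow(0,\infty)$, then $f_\varepsilon\in\mathcal{F}_\mathrm{convex}^\nearrow(0,\infty)$ for every $\varepsilon>0$ and $\hat f_\varepsilon\to\hat f$ as $\varepsilon\searrow0$ uniformly on every bounded closed interval of $(0,\infty)$. If $f\in\mathcal{F}_\mathrm{concave}^\nearrow(0,\infty)$, then $f_\varepsilon\in\mathcal{F}_\mathrm{concave}^\nearrow(0,\infty)$ for every $\varepsilon>0$ and $\check f_\varepsilon\to\check f$ as $\varepsilon\searrow0$ uniformly on every bounded closed interval of $(0,\infty)$.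
   Context: $\mathcal{F}_\mathrm{convex}^\nearrow(0,\infty)$ is the set of non-decreasing convex real functions $f$ on $(0,\infty)$ with $\lim_{x\to\infty}f(x)/x=+\infty$; for such $f$, $\hat f(t):=\sup_{x>0}\{xt-f(x)\}$, $t>0$. $\mathcal{F}_\mathrm{concave}^\nearrow(0,\infty)$ is the set of non-decreasing concave real functions $f$ on $(0,\infty)$ with $\lim_{x\to\infty}f(x)/x=0$; for such $f$, $\check f(t):=\inf_{x>0}\{xt-f(x)\}$, $t>0$. *)

From Stdlib Require Import Reals.
From Coquelicot Require Import Coquelicot.
Open Scope R_scope.

Definition F_convex_incr (f : R -> R) : Prop :=
  (forall x y, 0 < x -> x <= y -> f x <= f y) /\
  (forall x y l, 0 < x -> 0 < y -> 0 <= l <= 1 ->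
      f (l * x + (1 - l) * y) <= l * f x + (1 - l) * f y) /\
  is_lim (fun x => f x / x) p_infty p_infty.

Definition F_concave_incr (f : R -> R) : Prop :=
  (forall x y, 0 < x -> x <= y -> f x <= f y) /\
  (forall x y l, 0 < x -> 0 < y -> 0 <= l <= 1 ->
      l * f x + (1 - l) * f y <= f (l * x + (1 - l) * y)) /\
  is_lim (fun x => f x / x) p_infty 0.

(* hat f (t) = sup_{x>0} (x t - f x)  (finite for f in F_convex_incr) *)
Definition conv_hat (f : R -> R) (t : R) : R :=
  real (Lub_Rbar (fun y => exists x, 0 < x /\ y = x * t - f x)).

(* check f (t) = inf_{x>0} (x t - f x)  (finite for f in F_concave_incr) *)
Definition conc_check (f : R -> R) (t : R) : R :=
  real (Glb_Rbar (fun y => exists x, 0 < x /\ y = x * t - f x)).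

Definition mollify (phi f : R -> R) (eps : R) (x : R) : R :=
  RInt (fun t => phi t * f (x * exp (- (eps * t)))) (-1) 1.

Definition mollifier (phi : R -> R) : Prop :=
  (forall n x, ex_derive_n phi n x) /\
  (forall t, (t < -1 \/ 1 < t) -> phi t = 0) /\
  (forall t, 0 <= phi t) /\
  RInt phi (-1) 1 = 1.

Definition unif_cvg_right0_compact (g : R -> R -> R) (g0 : R -> R) : Prop :=
  forall a b, 0 < a -> a <= b ->
  forall e, 0 < e -> exists delta, 0 < delta /\
    forall eps, 0 < eps < delta -> forall t, a <= t <= b ->
      Rabs (g eps t - g0 t) < e.

From Stdlib Require Import Reals Lra.
From Coquelicot Require Import Coquelicot.
Open Scope R_scope.

(* Because phi >= 0 has mass 1 on [-1, 1] and f is nondecreasing, f_eps(x) lies between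
   f(x e^-eps) and f(x e^eps); positivity and linearity of the phi-average carry monotonicity
   and convexity (concavity) over to f_eps, and the sandwich carries the growth condition.
   The transforms turn a dilation of the argument of f into the inverse dilation of the
   argument of the transform, so hat f(t e^-eps) <= hat f_eps(t) <= hat f(t e^eps), and
   likewise for check. Finally hat f and check f are nondecreasing and Lipschitz on compact
   subintervals of (0, oo), so the width of this window is O(eps) uniformly on [a, b]. *)

(** * Convex functions on (0, oo) *)

Definition convex_pos (g : R -> R) : Prop :=
  forall x y l, 0 < x -> 0 < y -> 0 <= l <= 1 ->
    g (l * x + (1 - l) * y) <= l * g x + (1 - l) * g y.

Definition nondecreasing_pos (g : R -> R) : Prop :=
  forall x y, 0 < x -> x <= y -> g x <= g y.

Definition concave_pos (g : R -> R) : Prop :=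
  forall x y l, 0 < x -> 0 < y -> 0 <= l <= 1 ->
    l * g x + (1 - l) * g y <= g (l * x + (1 - l) * y).

Lemma convex_pos_chord g p q r : convex_pos g -> 0 < p -> p < q -> q < r ->
  (r - p) * g q <= (r - q) * g p + (q - p) * g r.
Proof.
  intros Hg Hp Hpq Hqr.
  set (l := (r - q) / (r - p)).
  assert (Hl : 0 <= l <= 1).
  { unfold l; split.
    - apply Rdiv_le_0_compat; lra.
    - apply Rmult_le_reg_r with (r - p); [lra|]. unfold Rdiv.
      rewrite Rmult_assoc, Rinv_l; lra. }
  assert (Hq : l * p + (1 - l) * r = q) by (unfold l; field; lra).
  pose proof (Hg p r l Hp ltac:(lra) Hl) as Hc; rewrite Hq in Hc.
  replace ((r - q) * g p + (q - p) * g r)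
    with ((r - p) * (l * g p + (1 - l) * g r)) by (unfold l; field; lra).
  apply Rmult_le_compat_l; lra.
Qed.

Lemma continuous_of_lipschitz_at (g : R -> R) x0 d L : 0 < d ->
  (forall y, Rabs (y - x0) < d -> Rabs (g y - g x0) <= L * Rabs (y - x0)) ->
  continuous g x0.
Proof.
  intros Hd HL. apply filterlim_locally. intros e.
  set (L' := Rabs L + 1).
  assert (HL' : 0 < L') by (unfold L'; pose proof (Rabs_pos L); lra).
  assert (Hr : 0 < Rmin d (e / L')).
  { apply Rmin_glb_lt; [lra|]. apply Rdiv_lt_0_compat; [apply cond_pos | lra]. }
  exists (mkposreal _ Hr). intros y Hy. change (Rabs (y - x0) < Rmin d (e / L')) in Hy.
  change (Rabs (g y - g x0) < e).
  pose proof (HL y (Rlt_le_trans _ _ _ Hy (Rmin_l _ _))) as Hgy.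
  assert (Hy' : Rabs (y - x0) * L' < e).
  { apply (Rlt_le_trans _ (e / L' * L')).
    - apply Rmult_lt_compat_r; [lra|]. exact (Rlt_le_trans _ _ _ Hy (Rmin_r _ _)).
    - unfold Rdiv. rewrite Rmult_assoc, Rinv_l; lra. }
  pose proof (Rle_abs L). pose proof (Rabs_pos (y - x0)). unfold L' in Hy'. nra.
Qed.

Lemma convex_pos_lipschitz_at g x0 : convex_pos g -> 0 < x0 -> exists L,
  forall y, Rabs (y - x0) < x0 / 2 -> Rabs (g y - g x0) <= L * Rabs (y - x0).
Proof.
  intros Hg Hx0. set (d := x0 / 2). assert (Hd : x0 = 2 * d) by (unfold d; lra).
  pose proof (Rle_abs (g (x0 + d) - g x0)). pose proof (Rabs_maj2 (g (x0 + d) - g x0)).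
  pose proof (Rle_abs (g (x0 - d) - g x0)). pose proof (Rabs_maj2 (g (x0 - d) - g x0)).
  set (P := Rabs (g (x0 + d) - g x0)) in *. set (Q := Rabs (g (x0 - d) - g x0)) in *.
  clearbody P Q.
  exists ((P + Q) / d). intros y Hy.
  apply (Rmult_le_reg_l d); [lra|].
  replace (d * ((P + Q) / d * Rabs (y - x0))) with ((P + Q) * Rabs (y - x0)) by (field; lra).
  destruct (Rabs_def2 _ _ Hy) as [Hy1 Hy2].
  destruct (Rtotal_order y x0) as [Hlt | [-> | Hgt]].
  - pose proof (convex_pos_chord g (x0 - d) y x0 Hg ltac:(lra) ltac:(lra) Hlt).
    pose proof (convex_pos_chord g y x0 (x0 + d) Hg ltac:(lra) Hlt ltac:(lra)).
    rewrite (Rabs_left (y - x0)) by lra.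
    unfold Rabs at 1; destruct Rcase_abs; nra.
  - unfold Rminus; rewrite !Rplus_opp_r, Rabs_R0. lra.
  - pose proof (convex_pos_chord g x0 y (x0 + d) Hg Hx0 Hgt ltac:(lra)).
    pose proof (convex_pos_chord g (x0 - d) x0 y Hg ltac:(lra) ltac:(lra) Hgt).
    rewrite (Rabs_pos_eq (y - x0)) by lra.
    unfold Rabs at 1; destruct Rcase_abs; nra.
Qed.

Lemma convex_pos_continuous g x0 : convex_pos g -> 0 < x0 -> continuous g x0.
Proof.
  intros Hg Hx0. destruct (convex_pos_lipschitz_at g x0 Hg Hx0) as [L HL].
  apply (continuous_of_lipschitz_at g x0 (x0 / 2) L); [lra | exact HL].
Qed.

Lemma concave_pos_continuous g x0 : concave_pos g -> 0 < x0 -> continuous g x0.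
Proof.
  intros Hg Hx0.
  assert (Hcvx : convex_pos (fun x => - g x)).
  { intros x y l Hx Hy Hl. pose proof (Hg x y l Hx Hy Hl). lra. }
  apply (continuous_ext (fun x => opp (- g x))); [intros x; apply Ropp_involutive|].
  apply (@continuous_opp _ _ R_NormedModule), convex_pos_continuous; assumption.
Qed.

(** * Averages against the mollifier *)

Lemma continuous_lin_comb (g h : R -> R) a b t : continuous g t -> continuous h t ->
  continuous (fun t => a * g t + b * h t) t.
Proof.
  intros Hg Hh.
  apply (continuous_plus (V := R_NormedModule) (fun t => a * g t) (fun t => b * h t)).
  - apply (continuous_mult (fun _ => a) g); [apply continuous_const | exact Hg].
  - apply (continuous_mult (fun _ => b) h); [apply continuous_const | exact Hh].
Qed.

(* [mollify phi f eps x] unfolds to [phi_avg phi (fun t => f (x * exp (- (eps * t))))]. *)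
Definition phi_avg (phi g : R -> R) : R := RInt (fun t => phi t * g t) (-1) 1.

Section Averages.

Variable phi : R -> R.
Hypothesis Hphi : mollifier phi.

Lemma mollifier_continuous t : continuous phi t.
Proof. apply (@ex_derive_continuous R_AbsRing R_NormedModule). exact (proj1 Hphi 1%nat t). Qed.

Lemma ex_RInt_phi_mul g : (forall t, continuous g t) ->
  ex_RInt (fun t => phi t * g t) (-1) 1.
Proof.
  intros Hg. apply (@ex_RInt_continuous R_CompleteNormedModule). intros t _.
  apply (continuous_mult phi g); [apply mollifier_continuous | apply Hg].
Qed.

Lemma phi_avg_le g h : (forall t, continuous g t) -> (forall t, continuous h t) ->
  (forall t, -1 < t < 1 -> g t <= h t) -> phi_avg phi g <= phi_avg phi h.
Proof.
  intros Hg Hh Hgh. destruct Hphi as [_ [_ [Hpos _]]].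
  apply RInt_le; [lra | apply ex_RInt_phi_mul; exact Hg | apply ex_RInt_phi_mul; exact Hh |].
  intros t Ht. apply Rmult_le_compat_l; [apply Hpos | apply Hgh, Ht].
Qed.

Lemma phi_avg_lin a b g h : (forall t, continuous g t) -> (forall t, continuous h t) ->
  phi_avg phi (fun t => a * g t + b * h t) = a * phi_avg phi g + b * phi_avg phi h.
Proof.
  intros Hg Hh. unfold phi_avg.
  rewrite <- (RInt_scal (V := R_CompleteNormedModule) _ _ _ a) by (apply ex_RInt_phi_mul; exact Hg).
  rewrite <- (RInt_scal (V := R_CompleteNormedModule) _ _ _ b) by (apply ex_RInt_phi_mul; exact Hh).
  rewrite <- (RInt_plus (V := R_CompleteNormedModule)).
  - apply RInt_ext. intros t _. unfold plus, scal; simpl; unfold mult; simpl. ring.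
  - apply (ex_RInt_scal (V := R_NormedModule)), ex_RInt_phi_mul; exact Hg.
  - apply (ex_RInt_scal (V := R_NormedModule)), ex_RInt_phi_mul; exact Hh.
Qed.

Lemma phi_avg_const c : phi_avg phi (fun _ => c) = c.
Proof.
  destruct Hphi as [_ [_ [_ Hint]]]. unfold phi_avg.
  transitivity (RInt (V := R_CompleteNormedModule) (fun t => scal c (phi t)) (-1) 1).
  - apply RInt_ext. intros t _. unfold scal; simpl; unfold mult; simpl. ring.
  - rewrite (RInt_scal (V := R_CompleteNormedModule)), Hint.
    + unfold scal; simpl; unfold mult; simpl. ring.
    + apply (@ex_RInt_continuous R_CompleteNormedModule). intros t _.
      apply mollifier_continuous.
Qed.

End Averages.

(** * The mollified function *)

Lemma exp_le a b : a <= b -> exp a <= exp b.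
Proof. intros [Hab | ->]; [left; apply exp_increasing, Hab | right; reflexivity]. Qed.

Lemma exp_opp_mul_exp eps : exp (- eps) * exp eps = 1.
Proof. rewrite <- exp_plus, Rplus_opp_l. apply exp_0. Qed.

Lemma exp_mul_exp_opp eps : exp eps * exp (- eps) = 1.
Proof. rewrite Rmult_comm. apply exp_opp_mul_exp. Qed.

Lemma exp_sub_exp_opp_le eps : 0 < eps <= 1 / 2 -> exp eps - exp (- eps) <= 4 * eps.
Proof.
  intros He. pose proof (exp_ineq1_le (- eps)) as Hlow.
  pose proof (exp_opp_mul_exp eps) as Hinv.
  set (u := exp (- eps)) in *. set (v := exp eps) in *.
  assert (Hu : 1 / 2 <= u) by lra.
  assert (Hkey : 1 - u * u <= 4 * eps * u) by nra.
  assert (Hprod : (v - u) * u = 1 - u * u) by (rewrite <- Hinv; ring).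
  nra.
Qed.

Section Mollification.

Variables phi f : R -> R.
Hypothesis Hphi : mollifier phi.
Hypothesis Hf : forall y, 0 < y -> continuous f y.

Lemma continuous_dilate x eps : 0 < x ->
  forall t, continuous (fun t => f (x * exp (- (eps * t)))) t.
Proof.
  intros Hx t. apply (continuous_comp (fun t => x * exp (- (eps * t))) f).
  - apply (@ex_derive_continuous R_AbsRing R_NormedModule). auto_derive. exact I.
  - apply Hf, Rmult_lt_0_compat; [exact Hx | apply exp_pos].
Qed.

Lemma mollify_nondecreasing eps :
  nondecreasing_pos f -> nondecreasing_pos (mollify phi f eps).
Proof.
  intros Hmono x y Hx Hxy.
  apply (phi_avg_le phi Hphi); [apply continuous_dilate; lra.. |].
  intros t _. pose proof (exp_pos (- (eps * t))).
  apply Hmono; nra.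
Qed.

Lemma mollify_sandwich eps x : nondecreasing_pos f -> 0 < eps -> 0 < x ->
  f (x * exp (- eps)) <= mollify phi f eps x <= f (x * exp eps).
Proof.
  intros Hmono He Hx.
  rewrite <- (phi_avg_const phi Hphi (f (x * exp (- eps)))) at 1.
  rewrite <- (phi_avg_const phi Hphi (f (x * exp eps))).
  split; apply (phi_avg_le phi Hphi);
    try (intros; apply continuous_const); try (apply continuous_dilate; exact Hx);
    intros t Ht; apply Hmono;
    solve [apply Rmult_lt_0_compat; [exact Hx | apply exp_pos]
          | apply Rmult_le_compat_l; [lra | apply exp_le; nra]].
Qed.

Lemma mollify_convex_comb eps x y l : 0 < x -> 0 < y ->
  l * mollify phi f eps x + (1 - l) * mollify phi f eps y =
  phi_avg phi (fun t => l * f (x * exp (- (eps * t))) + (1 - l) * f (y * exp (- (eps * t)))).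
Proof.
  intros Hx Hy. symmetry.
  apply (phi_avg_lin phi Hphi); apply continuous_dilate; assumption.
Qed.

Lemma mollify_convex eps : convex_pos f -> convex_pos (mollify phi f eps).
Proof.
  intros Hcvx x y l Hx Hy Hl.
  rewrite mollify_convex_comb by assumption.
  apply (phi_avg_le phi Hphi).
  - apply continuous_dilate. nra.
  - intros t. apply continuous_lin_comb; apply continuous_dilate; assumption.
  - intros t _. pose proof (exp_pos (- (eps * t))).
    replace ((l * x + (1 - l) * y) * exp (- (eps * t)))
      with (l * (x * exp (- (eps * t))) + (1 - l) * (y * exp (- (eps * t)))) by ring.
    apply Hcvx; [nra | nra | exact Hl].
Qed.

Lemma mollify_concave eps : concave_pos f -> concave_pos (mollify phi f eps).
Proof.
  intros Hccv x y l Hx Hy Hl.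
  rewrite mollify_convex_comb by assumption.
  apply (phi_avg_le phi Hphi).
  - intros t. apply continuous_lin_comb; apply continuous_dilate; assumption.
  - apply continuous_dilate. nra.
  - intros t _. pose proof (exp_pos (- (eps * t))).
    replace ((l * x + (1 - l) * y) * exp (- (eps * t)))
      with (l * (x * exp (- (eps * t))) + (1 - l) * (y * exp (- (eps * t)))) by ring.
    apply Hccv; [nra | nra | exact Hl].
Qed.

End Mollification.

Lemma Rbar_mult_pos_p_infty c : 0 < c -> Rbar_mult c p_infty = p_infty.
Proof.
  intros Hc. simpl. destruct Rle_dec; [destruct Rle_lt_or_eq_dec|]; [reflexivity | lra | lra].
Qed.

Lemma is_lim_div_dilate f c l : 0 < c ->
  is_lim (fun x => f x / x) p_infty l ->
  is_lim (fun x => f (x * c) / x) p_infty (Rbar_mult c l).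
Proof.
  intros Hc Hl.
  assert (Hdil : is_lim (fun x => x * c) p_infty p_infty).
  { rewrite <- (Rbar_mult_pos_p_infty c Hc) at 2. rewrite Rbar_mult_comm.
    apply is_lim_scal_r, is_lim_id. }
  apply (is_lim_ext_loc (fun x => c * (f (x * c) / (x * c)))).
  - exists 0. intros x Hx. field. lra.
  - apply is_lim_scal_l. apply (is_lim_comp (fun y => f y / y) (fun x => x * c) p_infty l p_infty); [exact Hl | exact Hdil |].
    exists 0. intros x Hx. discriminate.
Qed.

Lemma F_convex_incr_mollify phi f eps : mollifier phi -> F_convex_incr f -> 0 < eps ->
  F_convex_incr (mollify phi f eps).
Proof.
  intros Hphi [Hmono [Hcvx Hlim]] He.
  assert (Hf : forall y, 0 < y -> continuous f y)
    by (intros y Hy; apply convex_pos_continuous; assumption).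
  split; [|split].
  - apply mollify_nondecreasing; assumption.
  - apply mollify_convex; assumption.
  - apply (is_lim_le_p_loc (fun x => f (x * exp (- eps)) / x)).
    + exists 0. intros x Hx. apply Rmult_le_compat_r; [left; apply Rinv_0_lt_compat, Hx|].
      apply (mollify_sandwich phi f Hphi Hf); assumption.
    + rewrite <- (Rbar_mult_pos_p_infty (exp (- eps))) at 2 by apply exp_pos.
      apply is_lim_div_dilate; [apply exp_pos | exact Hlim].
Qed.

Lemma F_concave_incr_mollify phi f eps : mollifier phi -> F_concave_incr f -> 0 < eps ->
  F_concave_incr (mollify phi f eps).
Proof.
  intros Hphi [Hmono [Hccv Hlim]] He.
  assert (Hf : forall y, 0 < y -> continuous f y)
    by (intros y Hy; apply concave_pos_continuous; assumption).
  split; [|split].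
  - apply mollify_nondecreasing; assumption.
  - apply mollify_concave; assumption.
  - apply (is_lim_le_le_loc (fun x => f (x * exp (- eps)) / x) (fun x => f (x * exp eps) / x)).
    + exists 0. intros x Hx. pose proof (Rinv_0_lt_compat x Hx).
      destruct (mollify_sandwich phi f Hphi Hf eps x Hmono He Hx).
      unfold Rdiv. split; apply Rmult_le_compat_r; lra.
    + rewrite <- (Rmult_0_r (exp (- eps))).
      apply (is_lim_div_dilate f (exp (- eps)) 0); [apply exp_pos | exact Hlim].
    + rewrite <- (Rmult_0_r (exp eps)).
      apply (is_lim_div_dilate f (exp eps) 0); [apply exp_pos | exact Hlim].
Qed.

(** * The transforms *)

Lemma superlinear_eventually_gt f a : is_lim (fun x => f x / x) p_infty p_infty ->
  exists X, forall x, 0 < x -> X < x -> a * x < f x.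
Proof.
  intros Hlim. destruct (proj2 (is_lim_spec _ _ _) Hlim a) as [X HX]. simpl in HX.
  exists X. intros x Hx HXx. pose proof (HX x HXx) as Hq.
  apply (Rmult_lt_compat_r x) in Hq; [|exact Hx].
  replace (f x / x * x) with (f x) in Hq by (field; lra). exact Hq.
Qed.

Lemma sublinear_eventually_lt f a : is_lim (fun x => f x / x) p_infty 0 -> 0 < a ->
  exists X, forall x, 0 < x -> X < x -> f x < a * x.
Proof.
  intros Hlim Ha. destruct (proj2 (is_lim_spec _ _ _) Hlim (mkposreal a Ha)) as [X HX].
  simpl in HX. exists X. intros x Hx HXx.
  pose proof (HX x HXx) as Hq. rewrite Rminus_0_r in Hq. destruct (Rabs_def2 _ _ Hq) as [Hq' _].
  apply (Rmult_lt_compat_r x) in Hq'; [|exact Hx].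
  replace (f x / x * x) with (f x) in Hq' by (field; lra). exact Hq'.
Qed.

Lemma conv_hat_is_lub f t M : (forall x, 0 < x -> x * t - f x <= M) ->
  is_lub_Rbar (fun y => exists x, 0 < x /\ y = x * t - f x) (conv_hat f t).
Proof.
  intros HM. unfold conv_hat.
  pose proof (Lub_Rbar_correct (fun y => exists x, 0 < x /\ y = x * t - f x)) as Hlub.
  destruct (Lub_Rbar _) as [r | |]; [exact Hlub | exfalso | exfalso].
  - apply (proj2 Hlub (Finite M)). intros y [x [Hx ->]]. apply HM, Hx.
  - apply (proj1 Hlub (1 * t - f 1)). exists 1. split; [lra | reflexivity].
Qed.

Lemma conv_hat_le f t M : (forall x, 0 < x -> x * t - f x <= M) -> conv_hat f t <= M.
Proof.
  intros HM. apply (proj2 (conv_hat_is_lub f t M HM) (Finite M)).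
  intros y [x [Hx ->]]. apply HM, Hx.
Qed.

Lemma conc_check_is_glb f t M : (forall x, 0 < x -> M <= x * t - f x) ->
  is_glb_Rbar (fun y => exists x, 0 < x /\ y = x * t - f x) (conc_check f t).
Proof.
  intros HM. unfold conc_check.
  pose proof (Glb_Rbar_correct (fun y => exists x, 0 < x /\ y = x * t - f x)) as Hglb.
  destruct (Glb_Rbar _) as [r | |]; [exact Hglb | exfalso | exfalso].
  - apply (proj1 Hglb (1 * t - f 1)). exists 1. split; [lra | reflexivity].
  - apply (proj2 Hglb (Finite M)). intros y [x [Hx ->]]. apply HM, Hx.
Qed.

Lemma conc_check_ge f t M : (forall x, 0 < x -> M <= x * t - f x) -> M <= conc_check f t.
Proof.
  intros HM. apply (proj2 (conc_check_is_glb f t M HM) (Finite M)).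
  intros y [x [Hx ->]]. apply HM, Hx.
Qed.

Lemma convex_nondecreasing_lower_bound g : convex_pos g -> nondecreasing_pos g ->
  forall x, 0 < x -> 2 * g 1 - g 2 <= g x.
Proof.
  intros Hcvx Hmono x Hx. pose proof (Hmono 1 2 ltac:(lra) ltac:(lra)).
  destruct (Rlt_le_dec x 1) as [H1 | H1].
  - pose proof (convex_pos_chord g x 1 2 Hcvx Hx H1 ltac:(lra)). nra.
  - pose proof (Hmono 1 x ltac:(lra) H1). lra.
Qed.

Lemma conv_hat_bounded f t : F_convex_incr f ->
  exists M, forall x, 0 < x -> x * t - f x <= M.
Proof.
  intros [Hmono [Hcvx Hlim]].
  destruct (superlinear_eventually_gt f (Rabs t + 1) Hlim) as [X0 HX0].
  exists (Rabs X0 * Rabs t + Rabs (2 * f 1 - f 2)). intros x Hx.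
  pose proof (convex_nondecreasing_lower_bound f Hcvx Hmono x Hx).
  set (m := 2 * f 1 - f 2) in *.
  pose proof (Rle_abs t). pose proof (Rabs_maj2 m). pose proof (Rabs_pos m).
  pose proof (Rle_abs X0). pose proof (Rabs_pos t).
  destruct (Rlt_le_dec X0 x) as [Hlarge | Hsmall].
  - pose proof (HX0 x Hx Hlarge).
    assert (0 <= Rabs X0 * Rabs t) by (apply Rmult_le_pos; apply Rabs_pos). nra.
  - assert (x * t <= Rabs X0 * Rabs t); [|lra].
    apply (Rle_trans _ (x * Rabs t)); [apply Rmult_le_compat_l; lra|].
    apply Rmult_le_compat_r; lra.
Qed.

Lemma conv_hat_ub f t x : F_convex_incr f -> 0 < x -> x * t - f x <= conv_hat f t.
Proof.
  intros Hf Hx. destruct (conv_hat_bounded f t Hf) as [M HM].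
  apply (proj1 (conv_hat_is_lub f t M HM) (x * t - f x)). exists x. split; [exact Hx | reflexivity].
Qed.

Lemma conc_check_bounded f t : F_concave_incr f -> 0 < t ->
  exists M, forall x, 0 < x -> M <= x * t - f x.
Proof.
  intros [Hmono [Hccv Hlim]] Ht.
  destruct (sublinear_eventually_lt f t Hlim Ht) as [X0 HX0].
  set (X := Rabs X0 + 1).
  exists (- Rabs (f X)). intros x Hx.
  pose proof (Rle_abs (f X)). pose proof (Rle_abs X0).
  destruct (Rlt_le_dec X0 x) as [Hlarge | Hsmall].
  - pose proof (HX0 x Hx Hlarge). pose proof (Rabs_pos (f X)). nra.
  - pose proof (Hmono x X Hx ltac:(unfold X; lra)).
    pose proof (Rmult_lt_0_compat x t Hx Ht). lra.
Qed.

Lemma conc_check_lb f t x : F_concave_incr f -> 0 < t -> 0 < x ->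
  conc_check f t <= x * t - f x.
Proof.
  intros Hf Ht Hx. destruct (conc_check_bounded f t Hf Ht) as [M HM].
  apply (proj1 (conc_check_is_glb f t M HM) (x * t - f x)). exists x. split; [exact Hx | reflexivity].
Qed.

Lemma conv_hat_nondecreasing f s s' : F_convex_incr f -> s <= s' ->
  conv_hat f s <= conv_hat f s'.
Proof.
  intros Hf Hss'. apply conv_hat_le. intros x Hx.
  pose proof (conv_hat_ub f s' x Hf Hx). nra.
Qed.

Lemma conv_hat_lipschitz f B : F_convex_incr f -> exists K, 0 < K /\
  forall s s', 0 < s -> s <= s' -> s' <= B -> conv_hat f s' <= conv_hat f s + K * (s' - s).
Proof.
  intros Hf. pose proof Hf as [_ [_ Hlim]].
  destruct (superlinear_eventually_gt f (B + 1) Hlim) as [X0 HX0].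
  set (K := Rabs X0 + Rabs (f 1) + 1).
  pose proof (Rle_abs X0). pose proof (Rabs_pos X0).
  pose proof (Rabs_pos (f 1)). pose proof (Rle_abs (f 1)).
  exists K. split; [unfold K; lra |]. intros s s' Hs Hss' Hs'B. apply conv_hat_le. intros x Hx.
  pose proof (conv_hat_ub f s x Hf Hx). pose proof (conv_hat_ub f s 1 Hf Rlt_0_1).
  assert (HK : 0 <= K * (s' - s)) by (apply Rmult_le_pos; unfold K; lra).
  destruct (Rle_lt_dec x K) as [Hsmall | Hlarge].
  - assert (x * (s' - s) <= K * (s' - s)) by (apply Rmult_le_compat_r; lra). nra.
  - pose proof (HX0 x Hx ltac:(unfold K in Hlarge; lra)).
    assert (x * s' <= x * B) by (apply Rmult_le_compat_l; lra).
    unfold K in Hlarge. nra.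
Qed.

Lemma conv_hat_dilate_le g h c c' t : F_convex_incr h -> 0 < c -> c * c' = 1 ->
  (forall x, 0 < x -> h (x * c) <= g x) -> conv_hat g t <= conv_hat h (t * c').
Proof.
  intros Hh Hc Hcc' Hhg. apply conv_hat_le. intros x Hx.
  pose proof (conv_hat_ub h (t * c') (x * c) Hh ltac:(nra)).
  pose proof (Hhg x Hx).
  replace (x * c * (t * c')) with (x * t) in * by (transitivity (x * t * (c * c')); [rewrite Hcc'|]; ring).
  lra.
Qed.

Lemma conc_check_nondecreasing f s s' : F_concave_incr f -> 0 < s -> s <= s' ->
  conc_check f s <= conc_check f s'.
Proof.
  intros Hf Hs Hss'. apply conc_check_ge. intros x Hx.
  pose proof (conc_check_lb f s x Hf Hs Hx). nra.
Qed.

Lemma conc_check_lipschitz f A B : F_concave_incr f -> 0 < A -> exists K, 0 < K /\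
  forall s s', A <= s -> s <= s' -> s' <= B -> conc_check f s' <= conc_check f s + K * (s' - s).
Proof.
  intros Hf HA. pose proof Hf as [_ [_ Hlim]].
  destruct (sublinear_eventually_lt f (A / 2) Hlim ltac:(lra)) as [X0 HX0].
  set (C := Rabs B + Rabs (f 1)).
  assert (HC : 0 <= C) by (unfold C; pose proof (Rabs_pos B); pose proof (Rabs_pos (f 1)); lra).
  set (K := Rabs X0 + 2 * C / A + 1).
  assert (HKA : K * (A / 2) = Rabs X0 * (A / 2) + C + A / 2) by (unfold K; field; lra).
  assert (HCA : 0 <= 2 * C / A) by (apply Rdiv_le_0_compat; lra).
  pose proof (Rle_abs X0). pose proof (Rabs_pos X0).
  exists K. split; [unfold K; lra |]. intros s s' Hs Hss' Hs'B.
  assert (Hcheck : conc_check f s' <= C).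
  { pose proof (conc_check_lb f s' 1 Hf ltac:(lra) Rlt_0_1).
    pose proof (Rle_abs s'). pose proof (Rabs_maj2 (f 1)).
    assert (Rabs s' <= Rabs B) by (rewrite !Rabs_pos_eq; lra). unfold C. lra. }
  assert (HK : 0 <= K * (s' - s)) by (apply Rmult_le_pos; unfold K; lra).
  assert (conc_check f s' - K * (s' - s) <= conc_check f s); [|lra].
  apply conc_check_ge. intros x Hx.
  destruct (Rle_lt_dec x K) as [Hsmall | Hlarge].
  - pose proof (conc_check_lb f s' x Hf ltac:(lra) Hx).
    assert (x * (s' - s) <= K * (s' - s)) by (apply Rmult_le_compat_r; lra). nra.
  - pose proof (HX0 x Hx ltac:(unfold K in Hlarge; lra)).
    assert (x * A <= x * s) by (apply Rmult_le_compat_l; lra).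
    assert (K * (A / 2) < x * (A / 2)) by (apply Rmult_lt_compat_r; lra).
    assert (0 <= Rabs X0 * (A / 2)) by (apply Rmult_le_pos; lra).
    lra.
Qed.

Lemma conc_check_dilate_le g h c c' t : F_concave_incr h -> 0 < c -> 0 < t * c' -> c * c' = 1 ->
  (forall x, 0 < x -> g x <= h (x * c)) -> conc_check h (t * c') <= conc_check g t.
Proof.
  intros Hh Hc Htc' Hcc' Hgh. apply conc_check_ge. intros x Hx.
  pose proof (conc_check_lb h (t * c') (x * c) Hh Htc' ltac:(nra)).
  pose proof (Hgh x Hx).
  replace (x * c * (t * c')) with (x * t) in * by (transitivity (x * t * (c * c')); [rewrite Hcc'|]; ring).
  lra.
Qed.

(** * Uniform convergence *)

Lemma unif_cvg_of_dilation_sandwich (g : R -> R -> R) (T : R -> R) :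
  (forall s s', 0 < s -> s <= s' -> T s <= T s') ->
  (forall A B, 0 < A -> exists K, 0 < K /\ forall s s', A <= s -> s <= s' -> s' <= B ->
     T s' <= T s + K * (s' - s)) ->
  (forall eps t, 0 < eps -> 0 < t -> T (t * exp (- eps)) <= g eps t <= T (t * exp eps)) ->
  unif_cvg_right0_compact g T.
Proof.
  intros Hmono Hlip Hsand a b Ha Hab e He.
  destruct (Hlip (a * exp (- 1)) (b * exp 1)) as [K [HK HKlip]];
    [pose proof (exp_pos (- 1)); nra |].
  assert (Hd : 0 < e / (4 * K * b)) by (apply Rdiv_lt_0_compat; nra).
  exists (Rmin (1 / 2) (e / (4 * K * b))). split; [apply Rmin_glb_lt; lra |].
  intros eps [Heps Hdelta] t Ht.
  assert (Heps1 : eps < 1 / 2) by (eapply Rlt_le_trans; [exact Hdelta | apply Rmin_l]).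
  assert (Heps2 : eps * (4 * K * b) < e).
  { assert (Hlt : eps < e / (4 * K * b)) by (eapply Rlt_le_trans; [exact Hdelta | apply Rmin_r]).
    apply (Rmult_lt_compat_r (4 * K * b)) in Hlt; [|nra].
    replace (e / (4 * K * b) * (4 * K * b)) with e in Hlt by (field; nra). exact Hlt. }
  pose proof (Hsand eps t Heps ltac:(lra)) as Hg.
  pose proof (exp_sub_exp_opp_le eps ltac:(lra)) as Hwidth.
  pose proof (exp_pos (- 1)). pose proof (exp_pos (- eps)). pose proof (exp_pos eps).
  assert (exp (- 1) <= exp (- eps)) by (apply exp_le; lra).
  assert (exp eps <= exp 1) by (apply exp_le; lra).
  assert (exp (- eps) <= 1 <= exp eps) by (rewrite <- exp_0; split; apply exp_le; lra).
  set (s1 := t * exp (- eps)) in *. set (s2 := t * exp eps) in *.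
  assert (Hs1 : a * exp (- 1) <= s1 /\ 0 < s1 <= t) by (unfold s1; split; [|split]; nra).
  assert (Hs2 : t <= s2 <= b * exp 1) by (unfold s2; split; nra).
  assert (Hs21 : s2 - s1 <= 4 * eps * b) by (unfold s1, s2; nra).
  pose proof (HKlip s1 s2 ltac:(tauto) ltac:(lra) ltac:(tauto)).
  pose proof (Hmono s1 t ltac:(tauto) ltac:(tauto)). pose proof (Hmono t s2 ltac:(lra) ltac:(tauto)).
  apply Rabs_def1; nra.
Qed.

Lemma conv_hat_mollify_sandwich phi f eps t : mollifier phi -> F_convex_incr f -> 0 < eps ->
  conv_hat f (t * exp (- eps)) <= conv_hat (mollify phi f eps) t <= conv_hat f (t * exp eps).
Proof.
  intros Hphi Hf He. pose proof Hf as [Hmono [Hcvx _]].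
  assert (Hcont : forall y, 0 < y -> continuous f y)
    by (intros y Hy; apply convex_pos_continuous; assumption).
  pose proof (mollify_sandwich phi f Hphi Hcont eps) as Hsand.
  split.
  - rewrite <- (Rmult_1_r t) at 2. rewrite <- (exp_opp_mul_exp eps), <- Rmult_assoc.
    apply (conv_hat_dilate_le _ _ (exp (- eps))); [apply F_convex_incr_mollify; assumption | apply exp_pos |
      apply exp_opp_mul_exp |].
    intros x Hx. rewrite <- (Rmult_1_r x) at 2. rewrite <- (exp_opp_mul_exp eps), <- Rmult_assoc.
    apply Hsand; [exact Hmono | exact He | pose proof (exp_pos (- eps)); nra].
  - apply (conv_hat_dilate_le _ _ (exp (- eps))); [exact Hf | apply exp_pos | apply exp_opp_mul_exp |].
    intros x Hx. apply Hsand; assumption.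
Qed.

Lemma conc_check_mollify_sandwich phi f eps t : mollifier phi -> F_concave_incr f -> 0 < eps ->
  0 < t ->
  conc_check f (t * exp (- eps)) <= conc_check (mollify phi f eps) t <= conc_check f (t * exp eps).
Proof.
  intros Hphi Hf He Ht. pose proof Hf as [Hmono [Hccv _]].
  assert (Hcont : forall y, 0 < y -> continuous f y)
    by (intros y Hy; apply concave_pos_continuous; assumption).
  pose proof (mollify_sandwich phi f Hphi Hcont eps) as Hsand.
  pose proof (exp_pos eps). pose proof (exp_pos (- eps)).
  split.
  - apply (conc_check_dilate_le _ _ (exp eps)); [exact Hf | apply exp_pos | nra | apply exp_mul_exp_opp |].
    intros x Hx. apply Hsand; assumption.
  - rewrite <- (Rmult_1_r t) at 1. rewrite <- (exp_mul_exp_opp eps), <- Rmult_assoc.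
    apply (conc_check_dilate_le _ _ (exp eps));
      [apply F_concave_incr_mollify; assumption | apply exp_pos | | apply exp_mul_exp_opp |].
    { repeat apply Rmult_lt_0_compat; try apply exp_pos. exact Ht. }
    intros x Hx. rewrite <- (Rmult_1_r x) at 1. rewrite <- (exp_mul_exp_opp eps), <- Rmult_assoc.
    apply Hsand; [exact Hmono | exact He | nra].
Qed.

Theorem lemmaA3 (phi : R -> R) :
  mollifier phi ->
  (forall f : R -> R, F_convex_incr f ->
     (forall eps, 0 < eps -> F_convex_incr (mollify phi f eps)) /\
     unif_cvg_right0_compact (fun eps => conv_hat (mollify phi f eps)) (conv_hat f)) /\
  (forall f : R -> R, F_concave_incr f ->
     (forall eps, 0 < eps -> F_concave_incr (mollify phi f eps)) /\
     unif_cvg_right0_compact (fun eps => conc_check (mollify phi f eps)) (conc_check f)).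
Proof.
  intros Hphi. split; intros f Hf; split.
  - intros eps He. apply F_convex_incr_mollify; assumption.
  - apply unif_cvg_of_dilation_sandwich.
    + intros s s' _. apply conv_hat_nondecreasing, Hf.
    + intros A B HA. destruct (conv_hat_lipschitz f B Hf) as [K [HK HKlip]].
      exists K. split; [exact HK |]. intros s s' Hs. apply HKlip. lra.
    + intros eps t He _. apply conv_hat_mollify_sandwich; assumption.
  - intros eps He. apply F_concave_incr_mollify; assumption.
  - apply unif_cvg_of_dilation_sandwich.
    + intros s s'. apply conc_check_nondecreasing, Hf.
    + intros A B HA. apply conc_check_lipschitz; assumption.
    + intros eps t He Ht. apply conc_check_mollify_sandwich; assumption.
Qed.
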